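(* Let $\alpha\in\mathbb{R}$, let $\kappa\in\mathbb{N}_0\cup\{\infty\}$ and let $(s_j)_{j=0}^{\kappa}$ be a sequence of Hermitian complex $q\times q$ matrices. Let $\mathcal{G}$ be a subset of $\mathbb{C}$ with $\mathcal{G}\setminus\mathbb{R}\ne\emptyset$. Further, let $f\colon\mathcal{G}\to\mathbb{C}^{q\times q}$ be a matrix-valued function, let $\mathcal{G}^\vee:=\{z\in\mathbb{C}:\bar z\in\mathcal{G}\}$, and let $f^\vee\colon\mathcal{G}^\vee\to\mathbb{C}^{q\times q}$ be defined by $f^\vee(z):=f^*(\bar z)$. For each $k\in\{-1,0,\dots,\kappa\}$ and each $z\in\mathcal{G}^\vee\setminus\mathbb{R}$, there is a complex $(m_k+2)q\times(m_k+2)q$ matrix $X_k(z)$ such that $P_k^{[f^\vee]}(z)=X_k(z)P_k^{[f]}(\bar z)X_k^*(z)$.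
   Context: Here $m_{-1}$ is understood so that $P_{-1}$ is $q\times q$ (i.e. $(m_{-1}+2)q=q$), and $m_{2k}:=k$, $m_{2k+1}:=k$ for $k\in\mathbb{N}_0$. Notation: $s_{-1}:=0$, $s_{\alpha\triangleright j}:=-\alpha s_j+s_{j+1}$, $H_n:=[s_{j+k}]_{j,k=0}^n$, $H_{\alpha\triangleright n}:=[s_{\alpha\triangleright j+k}]_{j,k=0}^n$, $y_{0,n}:=\operatorname{col}(s_j)_{j=0}^n$, $u_n:=-\operatorname{col}(s_{j-1})_{j=0}^n$, $T_{q,n}:=[\delta_{j,k+1}I_q]_{j,k=0}^n$, $v_{q,n}:=\operatorname{col}(\delta_{j,0}I_q)_{j=0}^n$, $R_{T_{q,n}}(z):=(I_{(n+1)q}-zT_{q,n})^{-1}$. For $z\in\mathcal{G}\setminus\mathbb{R}$: $P_{2n}^{[f]}(z):=\begin{bmatrix}H_n & R_{T_{q,n}}(z)[v_{q,n}f(z)-u_n]\\ (R_{T_{q,n}}(z)[v_{q,n}f(z)-u_n])^* & \frac{f(z)-f^*(z)}{z-\bar z}\end{bmatrix}$ for $2n\le\kappa$; $P_{2n+1}^{[f]}(z):=\begin{bmatrix}H_{\alpha\triangleright n} & B(z)\\ B(z)^* & \frac{(z-\alpha)f(z)-[(z-\alpha)f(z)]^*}{z-\bar z}\end{bmatrix}$ with $B(z):=R_{T_{q,n}}(z)(v_{q,n}(z-\alpha)f(z)-(-\alpha u_n-y_{0,n}))$ for $2n+1\le\kappa$; and $P_{-1}^{[f]}(z):=\frac{(z-\alpha)f(z)-[(z-\alpha)f(z)]^*}{z-\bar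 z}$. *)

From HB Require Import structures.
From mathcomp Require Import all_boot all_order all_algebra.
From mathcomp Require Import reals.
From mathcomp Require Export complex.
Set Implicit Arguments. Unset Strict Implicit. Unset Printing Implicit Defensive.
Import Order.TTheory GRing.Theory Num.Theory.
Local Open Scope ring_scope.

Section Defs.
Variable R : realType.
Local Notation C := R[i].

Definition adjmx (m n : nat) (A : 'M[C]_(m, n)) : 'M[C]_(n, m) := (map_mx Num.conj A)^T.

(* kappa in N_0 \cup {oo}: Some K = K, None = oo.  leK j kappa <-> j <= kappa *)
Definition leK (j : nat) (kappa : option nat) : bool :=
  if kappa is Some K then (j <= K)%N else true.

Lemma modq_lt (m q : nat) (i : 'I_(m * q)) : (i %% q < q)%N.
Proof.
case: q i => [|q] i; last by rewrite ltn_mod.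
by case: i => i; rewrite muln0.
Qed.

Variable q : nat.

(* block (n+1)q x (n+1)q matrix [B j k]_{j,k=0}^n, blocks q x q *)
Definition blkmx (n : nat) (B : nat -> nat -> 'M[C]_q) : 'M[C]_(n.+1 * q) :=
  \matrix_(i, j) B (i %/ q)%N (j %/ q)%N (Ordinal (modq_lt i)) (Ordinal (modq_lt j)).

Definition blkcol (n : nat) (B : nat -> 'M[C]_q) : 'M[C]_(n.+1 * q, q) :=
  \matrix_(i, j) B (i %/ q)%N (Ordinal (modq_lt i)) j.

Definition Tmx (n : nat) : 'M[C]_(n.+1 * q) :=
  blkmx n (fun j k => if j == k.+1 then 1%:M else 0).
Definition vmx (n : nat) : 'M[C]_(n.+1 * q, q) :=
  blkcol n (fun j => if j == 0%N then 1%:M else 0).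
Definition RT (n : nat) (z : C) : 'M[C]_(n.+1 * q) := invmx (1%:M - z *: Tmx n).

Variable s : nat -> 'M[C]_q.
Variable alpha : R.
Local Notation a := ((alpha%:C)%C : C).

Definition sprev (j : nat) : 'M[C]_q := if j is j'.+1 then s j' else 0.
Definition sa (j : nat) : 'M[C]_q := - (a *: s j) + s j.+1.
Definition Hmx (n : nat) := blkmx n (fun j k => s (j + k)%N).
Definition Hamx (n : nat) := blkmx n (fun j k => sa (j + k)%N).
Definition y0 (n : nat) := blkcol n s.
Definition umx (n : nat) := - blkcol n sprev.

Definition Dq (g : 'M[C]_q) (z : C) : 'M[C]_q := (z - Num.conj z)^-1 *: (g - adjmx g).

Variable f : C -> 'M[C]_q.

Definition Peven (n : nat) (z : C) : 'M[C]_(n.+1 * q + q) :=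
  let B := RT n z *m (vmx n *m f z - umx n) in
  block_mx (Hmx n) B (adjmx B) (Dq (f z) z).

Definition Podd (n : nat) (z : C) : 'M[C]_(n.+1 * q + q) :=
  let g := (z - a) *: f z in
  let B := RT n z *m (vmx n *m g - (- (a *: umx n) - y0 n)) in
  block_mx (Hamx n) B (adjmx B) (Dq g z).

Definition Pm1 (z : C) : 'M[C]_q := Dq ((z - a) *: f z) z.

End Defs.

(* (m_k + 2) for k in {-1, 0, 1, ...}: m_{-1}+2 = 1, m_{2n}+2 = m_{2n+1}+2 = n+2 *)
Definition msz (k : int) : nat := match k with Posz n => (n./2).+2 | Negz _ => 1%N end.

Lemma msz_pos (n q : nat) : ((n./2).+2 * q = (n./2).+1 * q + q)%N.
Proof. by rewrite [((n./2).+2 * q)%N]mulSn addnC. Qed.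
Lemma msz_neg (q : nat) : (1 * q = q)%N.
Proof. by rewrite mul1n. Qed.

Definition Pk (R : realType) (q : nat) (s : nat -> 'M[R[i]]_q) (alpha : R)
    (f : R[i] -> 'M[R[i]]_q) (k : int) (z : R[i]) : 'M[R[i]]_(msz k * q) :=
  match k as k0 return 'M[R[i]]_(msz k0 * q) with
  | Posz n =>
      castmx (esym (msz_pos n q), esym (msz_pos n q))
        (if odd n then Podd s alpha f (n./2) z else Peven s f (n./2) z)
  | Negz _ => castmx (esym (msz_neg q), esym (msz_neg q)) (Pm1 alpha f z)
  end.

(* P_k^[f](z) is the block matrix [H, R(z) (v g - u); *, (g - g^* ) / (z - z')],
   z' the conjugate of z, R(z) = (I - z T)^-1, H a block Hankel matrix and
   g = f z (k even) or (z - alpha) f z (k odd).  Hermitian moments give the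
   Lyapunov identity H T^* - T H = u v^* - v u^*, equivalently
     (I - z' T) H (I - z' T)^* + (z - z') (u v^* - v u^* ) = (I - z T) H (I - z T)^*,
   and then X = [R(z) (I - z' T), (z - z') R(z) v; 0, I] satisfies
   P^[f^v](z) = X P^[f](z') X^*.  For k = -1 both sides are equal. *)

From HB Require Import structures.
From mathcomp Require Import all_boot all_order all_algebra.
From mathcomp Require Import reals complex.
From mathcomp Require Import ring.
Set Implicit Arguments. Unset Strict Implicit. Unset Printing Implicit Defensive.
Import Order.TTheory GRing.Theory Num.Theory.
Local Open Scope ring_scope.

Section Adjoint.
Variable R : realType.
Local Notation C := R[i].

Lemma adjmxE m n (A : 'M[C]_(m, n)) i j : adjmx A i j = Num.conj (A j i).
Proof. by rewrite !mxE. Qed.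

Lemma conj_realc (x : R) : Num.conj (x%:C)%C = (x%:C)%C.
Proof. exact: conjc_real. Qed.

Lemma conj_herm_entry n (M : 'M[C]_n) :
  adjmx M = M -> forall i j, Num.conj (M i j) = M j i.
Proof. by move=> M_herm i j; rewrite -adjmxE M_herm. Qed.

Lemma adjmxD m n (A B : 'M[C]_(m, n)) : adjmx (A + B) = adjmx A + adjmx B.
Proof. by rewrite /adjmx map_mxD linearD. Qed.

Lemma adjmxN m n (A : 'M[C]_(m, n)) : adjmx (- A) = - adjmx A.
Proof. by rewrite /adjmx map_mxN linearN. Qed.

Lemma adjmxB m n (A B : 'M[C]_(m, n)) : adjmx (A - B) = adjmx A - adjmx B.
Proof. by rewrite adjmxD adjmxN. Qed.

Lemma adjmxZ m n (c : C) (A : 'M[C]_(m, n)) : adjmx (c *: A) = Num.conj c *: adjmx A.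
Proof. by apply/matrixP => i j; rewrite !mxE rmorphM. Qed.

Lemma adjmxM m n p (A : 'M[C]_(m, n)) (B : 'M[C]_(n, p)) :
  adjmx (A *m B) = adjmx B *m adjmx A.
Proof. by rewrite /adjmx map_mxM trmx_mul. Qed.

Lemma adjmxK m n (A : 'M[C]_(m, n)) : adjmx (adjmx A) = A.
Proof. by apply/matrixP => i j; rewrite !mxE conjCK. Qed.

Lemma adjmx0 m n : adjmx (0 : 'M[C]_(m, n)) = 0.
Proof. by rewrite /adjmx map_mx0 trmx0. Qed.

Lemma adjmx1 n : adjmx (1%:M : 'M[C]_n) = 1%:M.
Proof. by rewrite /adjmx map_mx1 trmx1. Qed.

Lemma adjmx_1subZ n (x : C) (A : 'M[C]_n) :
  adjmx (1%:M - x *: A) = 1%:M - Num.conj x *: adjmx A.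
Proof. by rewrite adjmxB adjmxZ adjmx1. Qed.

Lemma adjmx_block m1 m2 n1 n2 (A : 'M[C]_(m1, n1)) (B : 'M[C]_(m1, n2))
    (D : 'M[C]_(m2, n1)) (E : 'M[C]_(m2, n2)) :
  adjmx (block_mx A B D E) = block_mx (adjmx A) (adjmx D) (adjmx B) (adjmx E).
Proof. by rewrite /adjmx map_block_mx tr_block_mx. Qed.

Lemma Dq_adj q (g : 'M[C]_q) (z : C) : Dq (adjmx g) z = Dq g (Num.conj z).
Proof. by rewrite /Dq adjmxK conjCK -[adjmx g - g]opprB scalerN -scaleNr -invrN opprB. Qed.

Definition congruent n (P Q : 'M[C]_n) := exists X, P = X *m Q *m adjmx X.

Lemma congruent_refl n (P : 'M[C]_n) : congruent P P.
Proof. by exists 1%:M; rewrite mul1mx adjmx1 mulmx1. Qed.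

Lemma congruent_castmx m n (e : m = n) (P Q : 'M[C]_m) :
  congruent P Q -> congruent (castmx (e, e) P) (castmx (e, e) Q).
Proof. by case: n / e; rewrite !castmx_id. Qed.

Lemma unitriangular_congrE n q (A H : 'M[C]_n) (E B : 'M[C]_(n, q)) (D : 'M[C]_q) :
  adjmx D = D ->
  block_mx A E 0 1%:M *m block_mx H B (adjmx B) D *m adjmx (block_mx A E 0 1%:M) =
  block_mx ((A *m H + E *m adjmx B) *m adjmx A + (A *m B + E *m D) *m adjmx E)
           (A *m B + E *m D) (adjmx (A *m B + E *m D)) D.
Proof.
move=> D_adj; rewrite adjmx_block adjmx0 adjmx1 !mulmx_block.
rewrite !mul0mx !mul1mx !mulmx0 !mulmx1 !add0r.
by rewrite adjmxD !adjmxM D_adj.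
Qed.

End Adjoint.

Lemma lyapunov_resolvent (K : comNzRingType) n q (T H Ta : 'M[K]_n)
    (u v : 'M[K]_(n, q)) (ua va : 'M[K]_(q, n)) (z w : K) :
  H *m Ta - T *m H = u *m va - v *m ua ->
  (1%:M - w *: T) *m H *m (1%:M - z *: Ta) + (z - w) *: (u *m va - v *m ua) =
  (1%:M - z *: T) *m H *m (1%:M - w *: Ta).
Proof.
move=> <-; rewrite !(mulmxBl, mulmxBr) !mul1mx !mulmx1.
rewrite -!scalemxAl -!scalemxAr !scalerA.
move: (T *m H) (H *m Ta) (T *m H *m Ta) => TH HTa THTa.
by apply/matrixP => i j; rewrite !mxE; ring.
Qed.

Section Congruence.
Variable R : realType.
Local Notation C := R[i].

Lemma congruent_resolvent_block n q (c : C) (H Mz Mw : 'M[C]_n)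
    (u v : 'M[C]_(n, q)) (g D : 'M[C]_q) :
  c != 0 -> Num.conj c = - c -> Mz \in unitmx -> Mw \in unitmx ->
  Mw *m H *m adjmx Mw + c *: (u *m adjmx v - v *m adjmx u) = Mz *m H *m adjmx Mz ->
  D = - c^-1 *: (g - adjmx g) ->
  congruent
    (block_mx H (invmx Mz *m (v *m adjmx g - u)) (adjmx (invmx Mz *m (v *m adjmx g - u))) D)
    (block_mx H (invmx Mw *m (v *m g - u)) (adjmx (invmx Mw *m (v *m g - u))) D).
Proof.
move=> c_neq0 conj_c uMz uMw lyap DE.
have := mulVmx uMz; have := mulmxV uMw.
move: (invmx Mz) (invmx Mw) => Rz Rw MwRw RzMz.
have D_adj : adjmx D = D.
  rewrite DE adjmxZ adjmxB adjmxK rmorphN fmorphV /= conj_c invrN opprK.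
  by rewrite scaleNr -scalerN opprB.
have AB : Rz *m Mw *m (Rw *m (v *m g - u)) = Rz *m (v *m g - u).
  by rewrite mulmxA -(mulmxA Rz) MwRw mulmx1.
exists (block_mx (Rz *m Mw) (c *: (Rz *m v)) 0 1%:M).
rewrite unitriangular_congrE // AB.
have -> : Rz *m (v *m g - u) + c *: (Rz *m v) *m D = Rz *m (v *m adjmx g - u).
  rewrite DE -scalemxAl -scalemxAr scalerA mulrN (mulfV c_neq0) scaleN1r.
  rewrite -mulmxA -mulmxBr; congr (_ *m _).
  by rewrite mulmxBr opprB addrCA addrAC subrr add0r.
congr block_mx.
(* The top-left block is Rz (Mw H Mw^* + c (u v^* - v u^* )) Rz^*, i.e. H by lyap. *)
have HE : Rz *m (Mz *m H *m adjmx Mz) *m adjmx Rz = H.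
  by rewrite !mulmxA RzMz mul1mx -mulmxA -adjmxM RzMz adjmx1 mulmx1.
have vuE : v *m adjmx (v *m g - u) - (v *m adjmx g - u) *m adjmx v =
           u *m adjmx v - v *m adjmx u.
  by rewrite adjmxB adjmxM mulmxBr mulmxBl mulmxA opprB addrC addrA addrNK.
have sandwichE P Q1 Q2 : Rz *m (P + c *: (Q1 - Q2)) *m adjmx Rz =
    Rz *m P *m adjmx Rz + c *: (Rz *m Q1 *m adjmx Rz) - c *: (Rz *m Q2 *m adjmx Rz).
  by rewrite mulmxDr mulmxDl -scalemxAr -scalemxAl mulmxBr mulmxBl scalerBr addrA.
rewrite mulmxDl -(mulmxA (c *: _)) -adjmxM AB -{1}HE -lyap -vuE sandwichE.
rewrite adjmxZ conj_c !adjmxM -scalemxAl -scalemxAr scaleNr !mulmxA.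
by congr (_ + _ - _).
Qed.

(* Peven and Podd are Pblk with g = f z, resp. g = (z - alpha) f z. *)
Definition Pblk n q (T H : 'M[C]_n) (u v : 'M[C]_(n, q)) (g : 'M[C]_q) (x : C) :
    'M[C]_(n + q) :=
  let B := invmx (1%:M - x *: T) *m (v *m g - u) in
  block_mx H B (adjmx B) (Dq g x).

Lemma Pblk_adj n q (T H : 'M[C]_n) (u v : 'M[C]_(n, q)) (g : 'M[C]_q) (z : C) :
  H *m adjmx T - T *m H = u *m adjmx v - v *m adjmx u ->
  1%:M - z *: T \in unitmx -> 1%:M - Num.conj z *: T \in unitmx ->
  z \isn't Num.real ->
  congruent (Pblk T H u v (adjmx g) z) (Pblk T H u v g (Num.conj z)).
Proof.
move=> lyap uMz uMw zNr; rewrite /Pblk Dq_adj.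
apply: (congruent_resolvent_block (c := z - Num.conj z) _ _ uMz uMw).
- by rewrite subr_eq0 eq_sym; apply: contra zNr => /eqP/CrealP.
- by rewrite rmorphB /= conjCK opprB.
- rewrite [in X in X = _]adjmx_1subZ [in X in _ = X]adjmx_1subZ conjCK.
  exact: lyapunov_resolvent.
- by rewrite /Dq conjCK -opprB invrN.
Qed.

End Congruence.

Lemma eqn_add_divmod q i j : (0 < q)%N ->
  (i == j + q)%N = (i %/ q == (j %/ q).+1)%N && (i %% q == j %% q)%N.
Proof.
move=> q_gt0; apply/eqP/andP => [->|[/eqP i_div /eqP i_mod]].
  by rewrite modnDr -{1}(mul1n q) divnDMl // addn1.
by rewrite (divn_eq i q) i_div i_mod mulSn -addnA -divn_eq addnC.
Qed.

Lemma sum_mul_eqn (K : pzSemiRingType) M (F : 'I_M -> K) (k0 : 'I_M) (m : nat) :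
  m = k0 -> \sum_(k < M) F k * (m == k)%:R = F k0.
Proof.
move=> ->; rewrite (bigD1 k0) //= eqxx mulr1 big1 ?addr0 // => k k_neq.
by rewrite val_eqE eq_sym (negbTE k_neq) mulr0.
Qed.

Lemma sum_mul_eqn_out (K : pzSemiRingType) M (F : 'I_M -> K) (m : nat) :
  (M <= m)%N -> \sum_(k < M) F k * (m == k)%:R = 0.
Proof.
move=> M_le; rewrite big1 // => k _.
by rewrite gtn_eqF ?mulr0 // (leq_trans (ltn_ord k) M_le).
Qed.

Section BlockEntries.
Variables (R : realType) (q' n : nat).
Local Notation C := R[i].
Local Notation q := q'.+1.
Local Notation N := (n.+1 * q)%N.

Lemma modq_ordE (i : 'I_N) : Ordinal (modq_lt i) = inord (i %% q).
Proof. by apply: val_inj; rewrite /= inordK // ltn_mod. Qed.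

Lemma inord_mod_small (x : 'I_N) (x_lt : (x < q)%N) : inord (x %% q) = Ordinal x_lt.
Proof. by apply: val_inj; rewrite /= inordK ?modn_small. Qed.

Lemma divn_addq k : ((k + q) %/ q = (k %/ q).+1)%N.
Proof. by rewrite -{1}(mul1n q) divnDMl // addn1. Qed.

Lemma shift_div_lt (x k : 'I_N) : (x : nat) = (k + q)%N -> (k %/ q < n)%N.
Proof.
move=> x_eq; rewrite ltn_divLR // -(ltn_add2r q) -x_eq -mulSnr; exact: ltn_ord.
Qed.

Lemma blkmxE (B : nat -> nat -> 'M[C]_q) (i j : 'I_N) :
  blkmx n B i j = B (i %/ q)%N (j %/ q)%N (inord (i %% q)) (inord (j %% q)).
Proof. by rewrite mxE !modq_ordE. Qed.

Lemma blkcolE (B : nat -> 'M[C]_q) (i : 'I_N) j :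
  blkcol n B i j = B (i %/ q)%N (inord (i %% q)) j.
Proof. by rewrite mxE modq_ordE. Qed.

Lemma TmxE (i j : 'I_N) : Tmx R q n i j = ((i : nat) == j + q)%N%:R.
Proof.
rewrite blkmxE eqn_add_divmod //; case: eqP => _; rewrite mxE //.
by rewrite -val_eqE /= !inordK ?ltn_mod.
Qed.

Lemma vmxE (i : 'I_N) (j : 'I_q) : vmx R q n i j = ((i : nat) == j)%:R.
Proof.
rewrite blkcolE; case: eqP => [i_div|i_div]; rewrite mxE.
  have i_lt : (i < q)%N by rewrite ltnNge -(divn_gt0 _ (ltn0Sn q')) i_div.
  by rewrite -val_eqE /= inordK modn_small.
by case: eqP => // ij; case: i_div; rewrite ij divn_small.
Qed.

Lemma mul_adjTmx_shift (A : 'M[C]_N) (i j k : 'I_N) : (j : nat) = (k + q)%N ->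
  (A *m adjmx (Tmx R q n)) i j = A i k.
Proof.
move=> j_eq; rewrite mxE; under eq_bigr => l _ do rewrite adjmxE TmxE rmorph_nat j_eq eqn_add2r.
exact: sum_mul_eqn.
Qed.

Lemma mul_adjTmx_head (A : 'M[C]_N) (i j : 'I_N) : (j < q)%N ->
  (A *m adjmx (Tmx R q n)) i j = 0.
Proof.
move=> j_lt; rewrite mxE big1 // => k _; rewrite adjmxE TmxE rmorph_nat.
by rewrite ltn_eqF ?mulr0 // (leq_trans j_lt) // leq_addl.
Qed.

Lemma mul_adjvmx_head (U : 'M[C]_(N, q)) (i j : 'I_N) (j' : 'I_q) :
  (j : nat) = j' -> (U *m adjmx (vmx R q n)) i j = U i j'.
Proof.
move=> j_eq; rewrite mxE; under eq_bigr => k _ do rewrite adjmxE vmxE rmorph_nat.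
exact: sum_mul_eqn.
Qed.

Lemma mul_adjvmx_tail (U : 'M[C]_(N, q)) (i j : 'I_N) : (q <= j)%N ->
  (U *m adjmx (vmx R q n)) i j = 0.
Proof.
move=> j_ge; rewrite mxE; under eq_bigr => k _ do rewrite adjmxE vmxE rmorph_nat.
exact: sum_mul_eqn_out.
Qed.

End BlockEntries.

(* umx is the case c0 = 0, and - alpha u - y0 the case t = sa, c0 = s 0. *)
Definition ushift (R : realType) q n (t : nat -> 'M[R[i]]_q) (c0 : 'M[R[i]]_q) :=
  - blkcol n (fun j => if j is j'.+1 then t j' else c0).

Section HankelLyapunov.
Variables (R : realType) (q' n : nat).
Local Notation C := R[i].
Local Notation q := q'.+1.
Local Notation N := (n.+1 * q)%N.
Variables (t : nat -> 'M[C]_q) (c0 : 'M[C]_q).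
Hypothesis t_herm : forall m, (m < n)%N -> adjmx (t m) = t m.
Hypothesis c0_herm : adjmx c0 = c0.

Local Notation T := (Tmx R q n).
Local Notation v := (vmx R q n).
Local Notation H := (Hmx t n).
Local Notation u := (ushift n t c0).

Lemma ushiftE (i : 'I_N) j :
  u i j = - (if (i %/ q)%N is m.+1 then t m else c0) (inord (i %% q)) j.
Proof. by rewrite mxE blkcolE. Qed.

Lemma Hmx_lyapunov : H *m adjmx T - T *m H = u *m adjmx v - v *m adjmx u.
Proof.
have shift (x : 'I_N) : (q <= x)%N -> {k : 'I_N | (x : nat) = (k + q)%N}.
  move=> x_ge; exists (Ordinal (leq_ltn_trans (leq_subr q x) (ltn_ord x))).
  by rewrite /= subnK.
have -> : T *m H = adjmx (adjmx H *m adjmx T) by rewrite adjmxM !adjmxK.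
have -> : v *m adjmx u = adjmx (u *m adjmx v) by rewrite adjmxM !adjmxK.
apply/matrixP => i j; rewrite [LHS]mxE [RHS]mxE ![(- (_ : 'M_N)) i j]mxE !adjmxE.
have [i_lt|/shift[ki i_eq]] := ltnP i q; have [j_lt|/shift[kj j_eq]] := ltnP j q.
- rewrite !mul_adjTmx_head // (mul_adjvmx_head _ _ (j' := Ordinal j_lt)) //.
  rewrite (mul_adjvmx_head _ _ (j' := Ordinal i_lt)) // !ushiftE !divn_small //.
  rewrite !inord_mod_small rmorphN /= (conj_herm_entry c0_herm) opprK rmorph0.
  by rewrite subrr addNr.
- rewrite (mul_adjTmx_shift _ _ j_eq) (mul_adjTmx_head _ _ i_lt) rmorph0 subr0.
  rewrite mul_adjvmx_tail ?j_eq ?leq_addl // (mul_adjvmx_head _ _ (j' := Ordinal i_lt)) //.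
  rewrite ushiftE j_eq divn_addq modnDr blkmxE (divn_small i_lt) (inord_mod_small i_lt) add0n.
  by rewrite rmorphN /= sub0r opprK (conj_herm_entry (t_herm (shift_div_lt j_eq))).
- rewrite (mul_adjTmx_head _ _ j_lt) (mul_adjTmx_shift _ _ i_eq) adjmxE conjCK sub0r.
  rewrite (mul_adjvmx_head _ _ (j' := Ordinal j_lt)) //.
  rewrite mul_adjvmx_tail ?i_eq ?leq_addl // rmorph0 subr0.
  by rewrite ushiftE i_eq divn_addq modnDr blkmxE (divn_small j_lt) (inord_mod_small j_lt) addn0.
- rewrite (mul_adjTmx_shift _ _ j_eq) (mul_adjTmx_shift _ _ i_eq) adjmxE conjCK.
  rewrite !mul_adjvmx_tail ?i_eq ?j_eq ?leq_addl // rmorph0 subrr.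
  by rewrite !blkmxE i_eq j_eq !divn_addq !modnDr addSnnS subrr.
Qed.

End HankelLyapunov.

Lemma unitmx_1subZ_Tmx (R : realType) q' n (x : R[i]) :
  1%:M - x *: Tmx R q'.+1 n \in unitmx.
Proof.
have entryE i j : (1%:M - x *: Tmx R q'.+1 n) i j =
    ((i : nat) == j)%:R - x * ((i : nat) == j + q'.+1)%N%:R.
  by rewrite 4!mxE TmxE.
have trig : is_trig_mx (1%:M - x *: Tmx R q'.+1 n).
  apply/is_trig_mxP => i j ij.
  by rewrite entryE ltn_eqF // ltn_eqF ?mulr0 ?subr0 // (leq_trans ij) // leq_addr.
rewrite unitmxE (det_trig trig) big1 ?unitr1 // => i _.
by rewrite entryE eqxx ltn_eqF ?mulr0 ?subr0 // addnS ltnS leq_addr.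
Qed.

Section Pk.
Variables (R : realType) (q' : nat) (s : nat -> 'M[R[i]]_q'.+1) (alpha : R).
Variable f : R[i] -> 'M[R[i]]_q'.+1.
Local Notation a := ((alpha%:C)%C : R[i]).
Local Notation fvee := (fun z => adjmx (f (Num.conj z))).

Lemma Peven_adj n z : (forall j, (j < n)%N -> adjmx (s j) = s j) ->
  z \isn't Num.real -> congruent (Peven s fvee n z) (Peven s f n (Num.conj z)).
Proof.
move=> s_herm zNr.
exact: Pblk_adj (Hmx_lyapunov s_herm (adjmx0 _ _ _)) (unitmx_1subZ_Tmx _ _ _)
  (unitmx_1subZ_Tmx _ _ _) zNr.
Qed.

Lemma ushift_sa n : - (a *: umx s n) - y0 s n = ushift n (sa s alpha) (s 0).
Proof.
apply/matrixP => i j; rewrite !mxE /sprev; case: (_ %/ _)%N => [|m]; rewrite !mxE.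
  by rewrite oppr0 mulr0 oppr0 sub0r.
by rewrite mulrN opprK opprD opprK.
Qed.

Lemma Podd_adj n z : (forall j, (j <= n)%N -> adjmx (s j) = s j) ->
  z \isn't Num.real -> congruent (Podd s alpha fvee n z) (Podd s alpha f n (Num.conj z)).
Proof.
move=> s_herm zNr.
have sa_herm j : (j < n)%N -> adjmx (sa s alpha j) = sa s alpha j.
  by move=> j_lt; rewrite adjmxD adjmxN adjmxZ conj_realc !s_herm // ltnW.
have g_adj : (z - a) *: fvee z = adjmx ((Num.conj z - a) *: f (Num.conj z)).
  by rewrite adjmxZ rmorphB /= conjCK conj_realc.
rewrite /Podd g_adj ushift_sa.
exact: Pblk_adj (Hmx_lyapunov sa_herm (s_herm 0%N isT)) (unitmx_1subZ_Tmx _ _ _)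
  (unitmx_1subZ_Tmx _ _ _) zNr.
Qed.

Lemma Pm1_adj z : Pm1 alpha fvee z = Pm1 alpha f (Num.conj z).
Proof. by rewrite /Pm1 -Dq_adj adjmxZ rmorphB /= conjCK conj_realc. Qed.

End Pk.

Lemma leq_half m : (m./2 <= m)%N.
Proof. by rewrite -{2}(odd_double_half m) -addnn addnA leq_addl. Qed.

Unset Implicit Arguments.

Theorem lemma4p8 (R : realType) (q : nat) (alpha : R) (kappa : option nat)
    (s : nat -> 'M[R[i]]_q)
    (Hherm : forall j : nat, leK j kappa -> adjmx (s j) = s j)
    (G : R[i] -> Prop)
    (HG : exists z : R[i], G z /\ z \isn't Num.real)
    (f : R[i] -> 'M[R[i]]_q) :
  let fvee := fun z : R[i] => adjmx (f (Num.conj z)) in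
  forall k : int,
    (-1 <= k)%R ->
    (if kappa is Some K then (k <= K%:Z)%R else true) ->
    forall z : R[i], G (Num.conj z) -> z \isn't Num.real ->
    exists X : 'M[R[i]]_(msz k * q),
      Pk s alpha fvee k z = X *m Pk s alpha f k (Num.conj z) *m adjmx X.
Proof.
move: s Hherm f; case: q => [|q'] s s_herm f fvee k _ k_le z _ zNr.
  exists 0; apply/matrixP => i.
  by have := leq_trans (ltn_ord i) (eq_leq (muln0 _)).
case: k k_le => [m|m] m_le; apply: congruent_castmx; last first.
  by rewrite Pm1_adj; apply: congruent_refl.
have s_herm_m j : (j <= m)%N -> adjmx (s j) = s j.
  by move=> j_le; apply: s_herm; case: kappa m_le => //= K; rewrite lez_nat; apply: leq_trans.
case: (odd m).
- by apply: Podd_adj => // j j_le; apply/s_herm_m/(leq_trans j_le)/leq_half.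
- by apply: Peven_adj => // j j_lt; apply/s_herm_m/ltnW/(leq_trans j_lt)/leq_half.
Qed.
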